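(* Let $G$ be a finite abelian group and let $k \in \mathbb{N}$. Let $B$ be a zero-sum sequence over $G$ with $\max\mathsf{L}(B)=k$. If there exist a factorization $\zeta$ of $B$ with $|\zeta|=k$ and a minimal zero-sum sequence $U$ occurring at least $\delta(G)$ times as a factor in $\zeta$, then $\max \mathsf{L}(BU)=k+1$.
   Context: $G$ is written additively. A sequence over $G$ is an element of the free abelian monoid $\mathcal{F}(G)$ (finite unordered list with repetitions). A zero-sum sequence has terms summing to $0$; a minimal zero-sum sequence is a non-empty zero-sum sequence with no proper non-empty zero-sum subsequence; $\mathcal{A}(G)$ is the set of these. Factorizations are elements of the free abelian monoid $\mathsf{Z}(G)$ over $\mathcal{A}(G)$ (formal unordered products of minimal zero-sum sequences); $\pi$ evaluates the product; a factorization of $B$ is a $\zeta$ with $\pi(\zeta)=B$; $|\zeta|$ is the number of factors; $\mathsf{L}(B)$ is the set of lengths of factorizations of $B$. $\mathsf{d}(\zeta,\xi)=\max\{|\gcd(\zeta,\xi)^{-1}\zeta|,|\gcd(\zeta,\xi)^{-1}\xi|\}$. Distinct $k,\ell\in\mathsf{L}(B)$ are adjacent lengths if no element of $\mathsf{L}(B)$ lies strictly between them. $\delta(\zeta)$ is the smallest $m\in\mathbb{N}_0$ such that for every $k\in\mathbb{N}$ with $k$, $|\zeta|$ adjacent lengths of $\pi(\zeta)$ there exists a factorization $\xi$ of $\pi(\zeta)$ with $|\xi|=k$ and $\mathsf{d}(\xi,\zeta)\le m$; $\delta(G)=\sup\{\delta(\zeta):\zeta\in\mathsf{Z}(G)\}$.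 *)

From HB Require Import structures.
From mathcomp Require Import all_boot all_order all_algebra.
From mathcomp Require Import finmap multiset.

Set Implicit Arguments.
Unset Strict Implicit.
Unset Printing Implicit Defensive.

Import GRing.Theory.
Local Open Scope mset_scope.

Section ZeroSum.
Variable G : finZmodType.

(* A sequence over G is an element of the free abelian monoid F(G) = {mset G}. *)
Definition zero_sum (S : {mset G}) : Prop := (\sum_(g <- S) g)%R = 0%R.

Definition minimal_zero_sum (S : {mset G}) : Prop :=
  S != mset0 /\ zero_sum S /\
  (forall T : {mset G}, T `<=` S -> T != mset0 -> zero_sum T -> T = S).

Definition is_factorization_elt (z : {mset {mset G}}) : Prop :=
  forall U, U \in z -> minimal_zero_sum U.

Definition pi (z : {mset {mset G}}) : {mset G} := \big[msetD/mset0]_(U <- z) U.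

Definition factorization_of (z : {mset {mset G}}) (B : {mset G}) : Prop :=
  is_factorization_elt z /\ pi z = B.

Definition in_L (B : {mset G}) (k : nat) : Prop :=
  exists z, factorization_of z B /\ size z = k.

Definition maxL_eq (B : {mset G}) (k : nat) : Prop :=
  in_L B k /\ forall l, in_L B l -> l <= k.

Definition fdist (z x : {mset {mset G}}) : nat :=
  maxn (size (z `\` (z `&` x))) (size (x `\` (z `&` x))).

Definition adjacent_lengths (B : {mset G}) (k l : nat) : Prop :=
  k <> l /\ in_L B k /\ in_L B l /\
  ~ (exists m, in_L B m /\ minn k l < m < maxn k l).

Definition delta_prop (z : {mset {mset G}}) (m : nat) : Prop :=
  forall k, adjacent_lengths (pi z) k (size z) ->
    exists x, factorization_of x (pi z) /\ size x = k /\ fdist x z <= m.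

Definition delta_eq (z : {mset {mset G}}) (m : nat) : Prop :=
  delta_prop z m /\ forall m', delta_prop z m' -> m <= m'.

(* delta(G) <= n, where delta(G) = sup { delta(zeta) : zeta in Z(G) }
   (a supremum in N_0 \cup {oo}; delta(G) <= n iff every delta(zeta) <= n) *)
Definition deltaG_le (n : nat) : Prop :=
  forall z m, is_factorization_elt z -> delta_eq z m -> m <= n.

End ZeroSum.

(** If [BU] had a factorization longer than [k+1], take the shortest such
    length [l]; it is adjacent to [k+1 = |zeta U|]. By the definition of
    [delta], some factorization [xi] of [BU] of length [l] lies within distance
    [delta(G) <= v_U(zeta)] of [zeta U]. As [zeta U] contains [U] exactly
    [v_U(zeta) + 1] times, [xi] must contain [U], and [xi U^-1] is a
    factorization of [B] of length [l - 1 > k], contradicting [max L(B) = k]. *)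
From Pilot Require Import Defs.
From HB Require Import structures.
From mathcomp Require Import all_boot all_order all_algebra.
From mathcomp Require Import finmap multiset.
From mathcomp Require Import zify.
From Stdlib Require Import Classical Wf_nat.

Set Implicit Arguments.
Unset Strict Implicit.
Unset Printing Implicit Defensive.

Local Open Scope mset_scope.

Lemma ex_minnP_classic (P : nat -> Prop) :
  (exists n, P n) -> exists2 m, P m & forall n, P n -> m <= n.
Proof.
move=> exP.
have [m [[Pm minm] _]] :=
  dec_inh_nat_subset_has_unique_least_element P (fun n => classic (P n)) exP.
by exists m => // n /minm /leP.
Qed.

Section MultisetSize.
Variable K : choiceType.
Implicit Types A B : {mset K}.

Lemma perm_msetD A B : perm_eq (A `+` B) ((A : seq K) ++ B).
Proof.
by apply/allP => x _ /=; rewrite count_cat !count_mem_mset msetE2.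
Qed.

Lemma size_msetD A B : size (A `+` B) = size A + size B.
Proof. by rewrite (perm_size (perm_msetD A B)) size_cat. Qed.

Lemma size_mset1 (a : K) : size [mset a] = 1.
Proof. by rewrite enum_msetn. Qed.

Lemma size_msubset A B : A `<=` B -> size A <= size B.
Proof. by move=> /msetBDKC <-; rewrite size_msetD leq_addr. Qed.

Lemma mset_le_size A a : A a <= size A.
Proof. by rewrite -count_mem_mset count_size. Qed.

Lemma msetB1_size A a : a \in A -> size A = (size (A `\ a)).+1.
Proof. by move=> /msetB1K {1}<-; rewrite size_msetD size_mset1. Qed.

End MultisetSize.

Section Factorizations.
Variable G : finZmodType.
Implicit Types (B U : {mset G}) (z x : {mset {mset G}}).

Lemma piE z a : Defs.pi z a = \sum_(U <- z) U a.
Proof.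
rewrite /Defs.pi; elim: (enum_mset z) => [|V s IHs]; first by rewrite !big_nil mset0E.
by rewrite !big_cons msetE2 IHs.
Qed.

Lemma pi_msetD z x : Defs.pi (z `+` x) = Defs.pi z `+` Defs.pi x.
Proof.
by apply/msetP => a; rewrite msetE2 !piE (perm_big _ (perm_msetD z x)) big_cat.
Qed.

Lemma pi_mset1 U : Defs.pi [mset U] = U.
Proof. by apply/msetP => a; rewrite piE enum_msetn big_cons big_nil addn0. Qed.

Lemma size_le_pi z : is_factorization_elt z -> size z <= size (Defs.pi z).
Proof.
move=> zF; have : {in enum_mset z, forall V, V != mset0} by move=> V /zF [].
rewrite /Defs.pi; elim: (enum_mset z) => [|V s IHs] //= nz_s.
rewrite big_cons size_msetD addnC -addn1 leq_add ?IHs //.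
  by move=> W sW; apply: nz_s; rewrite inE sW orbT.
by rewrite lt0n size_mset_eq0 nz_s ?mem_head.
Qed.

Lemma factorization_msetD1 z B U :
  factorization_of z B -> minimal_zero_sum U ->
  factorization_of (z `+` [mset U]) (B `+` U).
Proof.
move=> [zF <-] Umin; split; last by rewrite pi_msetD pi_mset1.
by move=> V; rewrite in_msetD in_mset1 => /orP[/zF //| /eqP ->].
Qed.

Lemma factorization_msetB1 x B U :
  factorization_of x (B `+` U) -> U \in x -> factorization_of (x `\ U) B.
Proof.
move=> [xF piX] Ux; split=> [V|].
  by rewrite in_msetB1 => /andP[_ /xF].
apply/msetP => a; move/msetP/(_ a): piX.
by rewrite -{1}(msetB1K Ux) msetDC pi_msetD pi_mset1 !msetE2 => /addIn.
Qed.

Lemma fdist_le_maxn z x : fdist x z <= maxn (size x) (size z).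
Proof. by rewrite /fdist geq_max !leq_max !(size_msubset (msubsetDl _ _)) orbT. Qed.

(* [v_U(z) - v_U(x)] copies of [U] lie outside [gcd(x, z)]. *)
Lemma mset_subn_le_fdist z x U : z U - x U <= fdist x z.
Proof.
apply: leq_trans (leq_maxr _ _); apply: leq_trans (mset_le_size _ U).
by rewrite !msetE2; lia.
Qed.

Lemma delta_eq_exists z : exists m, delta_eq z m.
Proof.
have [m Pm minm] : exists2 m, delta_prop z m & forall n, delta_prop z n -> m <= n.
  apply: ex_minnP_classic; exists (maxn (size (Defs.pi z)) (size z)).
  move=> k [_ [[x [[xF piX] <-]] _]]; exists x; do !split=> //.
  apply: leq_trans (fdist_le_maxn _ _) _.
  by rewrite geq_max leq_maxr leq_max -piX size_le_pi.
by exists m.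
Qed.

Lemma adjacent_next_length B k l :
  in_L B k -> in_L B l -> k < l -> exists2 l0, k < l0 & adjacent_lengths B l0 k.
Proof.
move=> Lk Ll lt_kl.
have [l0 [Ll0 lt_kl0] minl0] :=
  @ex_minnP_classic (fun n => in_L B n /\ k < n) (ex_intro _ l (conj Ll lt_kl)).
exists l0 => //; split; first by move=> e; rewrite e ltnn in lt_kl0.
split=> //; split=> // -[m [Lm]].
rewrite (minn_idPr (ltnW lt_kl0)) (maxn_idPl (ltnW lt_kl0)) => /andP[lt_km lt_ml0].
by have := minl0 m (conj Lm lt_km); rewrite leqNgt lt_ml0.
Qed.

End Factorizations.

Theorem lemma6p3 (G : finZmodType) (k : nat) (B : {mset G}) :
  zero_sum B -> maxL_eq B k ->
  forall (zeta : {mset {mset G}}) (U : {mset G}),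
    factorization_of zeta B -> size zeta = k ->
    minimal_zero_sum U -> deltaG_le G (zeta U) ->
    maxL_eq (B `+` U) k.+1.
Proof.
move=> _ [_ maxB] zeta U zetaF size_zeta Umin deltaU.
set z := zeta `+` [mset U].
have [zF pi_z] := factorization_msetD1 zetaF Umin.
have size_z : size z = k.+1 by rewrite size_msetD size_mset1 size_zeta addn1.
have Lz : in_L (B `+` U) k.+1 by exists z.
split=> // l Ll; rewrite leqNgt; apply/negP => lt_kl.
have [l0 lt_kl0 adj] := adjacent_next_length Lz Ll lt_kl.
have [m [delta_m min_m]] := delta_eq_exists z.
have [xi [xiF [size_xi dist_xi]]] : exists x, factorization_of x (Defs.pi z) /\
    size x = l0 /\ fdist x z <= m by apply: delta_m; rewrite pi_z size_z.
rewrite pi_z in xiF.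
have U_xi : U \in xi.
  rewrite -mset_gt0 lt0n; apply/negP => /eqP xiU.
  have := leq_trans (mset_subn_le_fdist z xi U)
    (leq_trans dist_xi (deltaU z m zF (conj delta_m min_m))).
  by rewrite xiU subn0 msetE2 msetnxx addn1 ltnn.
have := maxB _ (ex_intro _ _ (conj (factorization_msetB1 xiF U_xi) erefl)).
by rewrite -ltnS -(msetB1_size U_xi) size_xi leqNgt lt_kl0.
Qed.
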